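(* Let $u_1,\dots,u_m\in\mathbf{B}^d\subset\mathbb{R}^d$ and positive weights $c_1,\dots,c_m$ form a John decomposition of the identity for functions. Then $\sum_{i=1}^m c_i=d+1$ and the convex hull of $u_1,\dots,u_m$ contains the ball $\frac{1}{d+1}\mathbf{B}^d$.
   Context: $\mathbf{B}^d$ is the closed Euclidean unit ball in $\mathbb{R}^d$. The height function is $\hbar(x)=\sqrt{1-|x|^2}$ for $x\in\mathbf{B}^d$ and $0$ otherwise. Points $u_1,\dots,u_m\in\mathbf{B}^d$ and positive weights $c_1,\dots,c_m$ form a John decomposition of the identity for functions if (1) $\sum_i c_i\, u_i\otimes u_i=\mathrm{Id}_d$ (where $u\otimes u$ is the map $x\mapsto\langle u,x\rangle u$), (2) $\sum_i c_i\,\hbar(u_i)^2=1$, and (3) $\sum_i c_i u_i=0$. *)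

(* R an arbitrary real closed field (covers the reals). *)
From HB Require Import structures.
From mathcomp Require Import all_boot all_order all_algebra.
Set Implicit Arguments. Unset Strict Implicit. Unset Printing Implicit Defensive.
Import Order.TTheory GRing.Theory Num.Theory.
Local Open Scope ring_scope.

Definition dotv (R : rcfType) (d : nat) (x y : 'rV[R]_d) : R := (x *m y^T) 0 0.
Definition enorm (R : rcfType) (d : nat) (x : 'rV[R]_d) : R := Num.sqrt (dotv x x).

(* closed Euclidean ball of radius r centred at 0; B^d = ball 1 *)
Definition cball (R : rcfType) (d : nat) (r : R) : 'rV[R]_d -> Prop :=
  fun x => enorm x <= r.

Definition hbar (R : rcfType) (d : nat) (x : 'rV[R]_d) : R :=
  if enorm x <= 1 then Num.sqrt (1 - enorm x ^+ 2) else 0.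

(* u ⊗ u : the matrix of x |-> <u,x> u  (symmetric, so same in row convention) *)
Definition tensor (R : rcfType) (d : nat) (u : 'rV[R]_d) : 'M[R]_d := u^T *m u.

Definition john_decomposition (R : rcfType) (d m : nat)
  (u : 'I_m -> 'rV[R]_d) (c : 'I_m -> R) : Prop :=
  (forall i, cball 1 (u i)) /\ (forall i, 0 < c i) /\
  \sum_(i < m) c i *: tensor (u i) = 1%:M /\
  \sum_(i < m) c i * hbar (u i) ^+ 2 = 1 /\
  \sum_(i < m) c i *: u i = 0.

Definition conv_hull (R : rcfType) (d m : nat) (u : 'I_m -> 'rV[R]_d)
  : 'rV[R]_d -> Prop :=
  fun x => exists lam : 'I_m -> R,
    (forall i, 0 <= lam i) /\ \sum_(i < m) lam i = 1 /\
    x = \sum_(i < m) lam i *: u i.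

(* Taking the trace of the identity decomposition gives sum_i c_i |u_i|^2 = d,
   and adding sum_i c_i h(u_i)^2 = sum_i c_i (1 - |u_i|^2) = 1 gives
   sum_i c_i = d + 1.  For |y| <= 1 the weights c_i (1 + <y, u_i>) / (d + 1)
   are nonnegative (since |u_i| <= 1), sum to 1 because sum_i c_i u_i = 0,
   and reproduce y / (d + 1) because sum_i c_i <y, u_i> u_i = y. *)
From HB Require Import structures.
From mathcomp Require Import all_boot all_order all_algebra.
From mathcomp Require Import lra.
Import Order.TTheory GRing.Theory Num.Theory.
Set Implicit Arguments.
Unset Strict Implicit.
Local Open Scope ring_scope.

Section InnerProduct.
Variables (R : rcfType) (d : nat).
Implicit Types (x y z : 'rV[R]_d) (a r : R).

Lemma dotvE x y : dotv x y = \sum_j x 0 j * y 0 j.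
Proof. by rewrite /dotv mxE; apply: eq_bigr => j _; rewrite mxE. Qed.

Lemma dotvC x y : dotv x y = dotv y x.
Proof. by rewrite !dotvE; apply: eq_bigr => j _; rewrite mulrC. Qed.

Lemma dotv_ge0 x : 0 <= dotv x x.
Proof. by rewrite dotvE; apply: sumr_ge0 => j _; rewrite -expr2 sqr_ge0. Qed.

Lemma dotvDl x y z : dotv (x + y) z = dotv x z + dotv y z.
Proof. by rewrite !dotvE -big_split; apply: eq_bigr => j _; rewrite !mxE mulrDl. Qed.

Lemma dotvZl a x y : dotv (a *: x) y = a * dotv x y.
Proof. by rewrite !dotvE mulr_sumr; apply: eq_bigr => j _; rewrite !mxE mulrA. Qed.

Lemma dotvZr a x y : dotv x (a *: y) = a * dotv x y.
Proof. by rewrite dotvC dotvZl dotvC. Qed.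

Lemma dotv_sumr m x (f : 'I_m -> 'rV[R]_d) :
  dotv x (\sum_i f i) = \sum_i dotv x (f i).
Proof.
rewrite dotvC /dotv mulmx_suml summxE.
by apply: eq_bigr => i _; rewrite -[RHS]/(dotv _ _) dotvC.
Qed.

Lemma dotv0r x : dotv x 0 = 0.
Proof. by rewrite dotvE big1 // => j _; rewrite mxE mulr0. Qed.

Lemma enorm_ge0 x : 0 <= enorm x.
Proof. exact: sqrtr_ge0. Qed.

Lemma enorm_sq x : enorm x ^+ 2 = dotv x x.
Proof. by rewrite /enorm sqr_sqrtr // dotv_ge0. Qed.

Lemma cball_dotv_le r x : cball r x -> dotv x x <= r ^+ 2.
Proof.
rewrite /cball -enorm_sq => le_xr; have := enorm_ge0 x; nra.
Qed.

Lemma cballV_dotvZ_le1 r x :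
  0 < r -> cball r^-1 x -> dotv (r *: x) (r *: x) <= 1.
Proof.
move=> r_gt0 /cball_dotv_le le_x; rewrite dotvZl dotvZr mulrA -expr2.
have := ler_wpM2l (sqr_ge0 r) le_x.
by rewrite -exprMn mulfV ?expr1n // lt0r_neq0.
Qed.

Lemma dotv_ge_N1 x y : dotv x x <= 1 -> dotv y y <= 1 -> -1 <= dotv x y.
Proof.
have := dotv_ge0 (x + y).
rewrite !dotvDl ![dotv _ (x + y)]dotvC !dotvDl [dotv y x]dotvC; lra.
Qed.

Lemma hbar_sq x : cball 1 x -> hbar x ^+ 2 = 1 - dotv x x.
Proof.
move=> x_in; have := cball_dotv_le x_in; rewrite expr1n => le_x.
by rewrite /hbar (x_in : enorm x <= 1) sqr_sqrtr ?enorm_sq // subr_ge0.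
Qed.

Lemma tensorE y x : y *m tensor x = dotv y x *: x.
Proof. by rewrite /tensor mulmxA [y *m x^T]mx11_scalar mul_scalar_mx. Qed.

Lemma mxtrace_tensor x : \tr (tensor x) = dotv x x.
Proof. by rewrite /tensor mxtrace_mulC trace_mx11. Qed.

End InnerProduct.

Section TightFrame.
Variables (R : rcfType) (d m : nat) (u : 'I_m -> 'rV[R]_d) (c : 'I_m -> R).
Hypothesis frame : \sum_i c i *: tensor (u i) = 1%:M.

Lemma tight_frame_trace : \sum_i c i * dotv (u i) (u i) = d%:R.
Proof.
rewrite -[d%:R]mxtrace_scalar -frame linear_sum /=.
by apply: eq_bigr => i _; rewrite linearZ /= mxtrace_tensor.
Qed.

Lemma tight_frame_reconstruction y : \sum_i (c i * dotv y (u i)) *: u i = y.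
Proof.
rewrite -[RHS]mulmx1 -frame mulmx_sumr.
by apply: eq_bigr => i _; rewrite -scalemxAr tensorE scalerA.
Qed.

End TightFrame.

Section JohnDecomposition.
Variables (R : rcfType) (d m : nat) (u : 'I_m -> 'rV[R]_d) (c : 'I_m -> R).
Hypothesis john : john_decomposition u c.

Lemma john_sum_weights : \sum_i c i = d.+1%:R.
Proof.
have [u_in [_ [frame [height _]]]] := john.
rewrite -natr1 -(tight_frame_trace frame) -height addrC -big_split /=.
by apply: eq_bigr => i _; rewrite hbar_sq // -mulrDr subrK mulr1.
Qed.

Lemma john_conv_hull y : dotv y y <= 1 -> conv_hull u ((d.+1%:R)^-1 *: y).
Proof.
have [u_in [c_gt0 [frame [_ centred]]]] := john.
move=> le_y; set k : R := d.+1%:R.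
have k_neq0 : k != 0 by rewrite pnatr_eq0.
have centred_dot : \sum_i c i * dotv y (u i) = 0.
  by rewrite -[RHS](dotv0r y) -centred dotv_sumr; apply: eq_bigr => i _; rewrite dotvZr.
exists (fun i => k^-1 * (c i * (1 + dotv y (u i)))); split; [|split].
- move=> i; have := cball_dotv_le (u_in i); rewrite expr1n => le_ui.
  rewrite mulr_ge0 ?invr_ge0 ?ler0n // mulr_ge0 ?(ltW (c_gt0 i)) //.
  have := dotv_ge_N1 le_y le_ui; lra.
- rewrite -mulr_sumr.
  under eq_bigr do rewrite mulrDr mulr1.
  by rewrite big_split /= centred_dot addr0 john_sum_weights mulVf.
- under eq_bigr do rewrite -scalerA.
  rewrite -scaler_sumr; congr (_ *: _).
  under eq_bigr do rewrite mulrDr mulr1 scalerDl.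
  by rewrite big_split /= centred add0r tight_frame_reconstruction.
Qed.

End JohnDecomposition.

Theorem corollary4p3 (R : rcfType) (d m : nat)
  (u : 'I_m -> 'rV[R]_d) (c : 'I_m -> R) :
  john_decomposition u c ->
  \sum_(i < m) c i = d.+1%:R /\
  (forall x : 'rV[R]_d, cball (d.+1%:R)^-1 x -> conv_hull u x).
Proof.
move=> john; split; first exact: john_sum_weights john.
move=> x x_in; have k_gt0 : 0 < d.+1%:R :> R by rewrite ltr0n.
have -> : x = (d.+1%:R)^-1 *: (d.+1%:R *: x).
  by rewrite scalerA mulVf ?scale1r ?lt0r_neq0.
exact/(john_conv_hull john)/cballV_dotvZ_le1.
Qed.
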